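(* Assume the Framework and the Purification Postulate. For every system $\mathrm A$ and every pair of pure states $\psi,\psi'\in\mathfrak S_1(\mathrm A)$ there is a reversible channel $\mathcal U\in\mathbf G_{\mathrm A}$ such that $\psi'=\mathcal U\psi$.
   Context: Framework. We work in an operational-probabilistic theory: there is a collection of systems $\mathrm A,\mathrm B,\dots$, closed under a composition $\mathrm A\mathrm B$ (associative, symmetric up to a reversible swap, with a trivial system $\mathrm I$ satisfying $\mathrm A\mathrm I=\mathrm A$); for each pair of systems a set $\mathfrak T(\mathrm A,\mathrm B)$ of transformations; a test from $\mathrm A$ to $\mathrm B$ is a finite collection $\{\mathcal C_i\}_{i\in X}\subseteq\mathfrak T(\mathrm A,\mathrm B)$, and every transformation belongs to some test. Tests are closed under sequential composition, parallel composition ($\otimes$), coarse-graining (summing outcomes over the blocks of a partition of $X$) and conditioning (choosing the next test depending on the outcome of the previous one). States of $\mathrm A$ are the elements of $\mathfrak S(\mathrm A):=\mathfrak T(\mathrm I,\mathrm A)$, effects are the elements of $\mathfrak T(\mathrm A,\mathrm I)$, and transformations $\mathrm I\to\mathrm I$ are probabilities in $[0,1]$ (those of a test sum to $1$; composition is multiplication). An effect $a$ and a state $\rho$ give the probability $(a|\rho)$. States (effects) are identified when they give equal probabilities on all effects (states); transformations $\mathcal C,\mathcal C'$ are identified when $\mathcal C\otimes\mathcal I_{\mathrm S}$ and $\mathcal C'\otimes\mathcal I_{\mathrm S}$ act identically on all states of $\mathrm A\mathrm S$ for every system $\mathrm S$. States span a finite-dimensional real vector space $\mathfrak S_{\mathbb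 R}(\mathrm A)$, transformations act linearly, and $\mathfrak T_{\mathbb R}(\mathrm A,\mathrm B)$ is the real span of $\mathfrak T(\mathrm A,\mathrm B)$. Standing assumptions: (i) causality: each system $\mathrm A$ has a unique deterministic effect $e_{\mathrm A}$ (the effect forming a one-outcome observation test), and $e_{\mathrm A\mathrm B}=e_{\mathrm A}\otimes e_{\mathrm B}$; (ii) local discriminability: if two states of $\mathrm A\mathrm B$ differ, some product effect $a\otimes b$ gives them different probabilities; (iii) all sets of states are closed, the theory is not deterministic (hence all sets of states, effects and transformations are convex), and perfectly distinguishable states exist. A state $\rho$ is normalized if $(e|\rho)=1$; $\mathfrak S_1(\mathrm A)$ is the set of normalized states. A channel is a $\mathcal C\in\mathfrak T(\mathrm A,\mathrm B)$ with $e_{\mathrm B}\circ\mathcal C=e_{\mathrm A}$. A channel $\mathcal U\in\mathfrak T(\mathrm A,\mathrm B)$ is reversible if some channel $\mathcal W\in\mathfrak T(\mathrm B,\mathrm A)$ satisfies $\mathcal W\mathcal U=\mathcal I_{\mathrm A}$, $\mathcal U\mathcal W=\mathcal I_{\mathrm B}$; $\mathbf G_{\mathrm A}$ is the group of reversible channels on $\mathrm A$. The marginal of a state $\sigma$ of $\mathrm A\mathrm B$ on $\mathrm A$ is $(\mathcal I_{\mathrm A}\otimes e_{\mathrm B})\sigma$. Refinement. For $\mathcal C\in\mathfrak T(\mathrm A,\mathrm B)$, write $\mathcal D\prec\mathcal C$ if there are a test $\{\mathcal D_j\}_{j\in Y}$ and $Y_0\subseteq Y$ with $\mathcal C=\sum_{j\in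 Y_0}\mathcal D_j$ and $\mathcal D\in\{\mathcal D_j\}_{j\in Y_0}$; the refinement set is $D_{\mathcal C}=\{\mathcal D:\mathcal D\prec\mathcal C\}$. $\mathcal C$ is atomic if $\mathcal D\prec\mathcal C$ implies $\mathcal D=\lambda\mathcal C$ for some $\lambda\in[0,1]$. A pure state is an atomic state; a state is mixed otherwise. Purification Postulate. For every $\rho\in\mathfrak S_1(\mathrm A)$ there are a system $\mathrm B$ and a pure $\Psi\in\mathfrak S_1(\mathrm A\mathrm B)$ with $(\mathcal I_{\mathrm A}\otimes e_{\mathrm B})\Psi=\rho$ (a purification of $\rho$, with purifying system $\mathrm B$); and if $\Psi,\Psi'\in\mathfrak S_1(\mathrm A\mathrm B)$ are purifications of the same state, then $\Psi'=(\mathcal I_{\mathrm A}\otimes\mathcal U)\Psi$ for some $\mathcal U\in\mathbf G_{\mathrm B}$. *)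

(* Tr O A B models the real vector space
   T_R(A,B) (so Leibniz equality = the paper's identification of
   transformations); the predicate isT picks out the actual
   transformations T(A,B). *)
From Stdlib Require Import Reals List Permutation.
Import ListNotations.
Open Scope R_scope.

Set Implicit Arguments.

Record OPT := {
  Sys : Type;
  sI : Sys;
  sC : Sys -> Sys -> Sys;
  sC_assoc : forall A B C, sC A (sC B C) = sC (sC A B) C;
  sC_Il : forall A, sC sI A = A;
  sC_Ir : forall A, sC A sI = A;
  Tr : Sys -> Sys -> Type;
  Tzero : forall A B, Tr A B;
  Tadd : forall A B, Tr A B -> Tr A B -> Tr A B;
  Tscal : forall A B, R -> Tr A B -> Tr A B;
  Tid : forall A, Tr A A;
  Tseq : forall A B C, Tr B C -> Tr A B -> Tr A C;
  Tpar : forall A B C D, Tr A B -> Tr C D -> Tr (sC A C) (sC B D);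
  isT : forall A B, Tr A B -> Prop;
  is_test : forall A B, list (Tr A B) -> Prop;  (* tests, as finite indexed families *)
  eff : forall A, Tr A sI;
  prob : Tr sI sI -> R                       (* identification T_R(I,I) = R *)
}.

Arguments sI {_}.
Arguments sC {_}.
Arguments Tr {_}.
Arguments Tzero {_ _ _}.
Arguments Tadd {_ _ _}.
Arguments Tscal {_ _ _}.
Arguments Tid {_}.
Arguments Tseq {_ _ _ _}.
Arguments Tpar {_ _ _ _ _}.
Arguments isT {_ _ _}.
Arguments is_test {_ _ _}.
Arguments eff {_}.
Arguments prob {_}.

Section Defs.
Variable O : OPT.

Definition castT {A A' B B' : Sys O} (ea : A = A') (eb : B = B') (f : Tr A B)
  : Tr A' B' :=
  match ea in _ = X return Tr X B' with
  | eq_refl => match eb in _ = Y return Tr A Y with eq_refl => f end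
  end.

Definition Tsum {A B : Sys O} (l : list (Tr A B)) : Tr A B :=
  fold_right Tadd Tzero l.

Definition lincomb {A B : Sys O} (cs : list R) (l : list (Tr A B)) : Tr A B :=
  Tsum (map (fun p => Tscal (fst p) (snd p)) (combine cs l)).

Definition prb {A : Sys O} (a : Tr A sI) (rho : Tr sI A) : R := prob (Tseq a rho).

Definition normalized {A : Sys O} (rho : Tr sI A) : Prop := prb (eff A) rho = 1.

Definition normstate {A : Sys O} (rho : Tr sI A) : Prop := isT rho /\ normalized rho.

Definition channel {A B : Sys O} (C : Tr A B) : Prop :=
  isT C /\ Tseq (eff B) C = eff A.

Definition reversible {A B : Sys O} (U : Tr A B) : Prop :=
  channel U /\ exists W : Tr B A, channel W /\ Tseq W U = Tid A /\ Tseq U W = Tid B.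

Definition marginal {A B : Sys O} (s : Tr sI (sC A B)) : Tr sI A :=
  castT eq_refl (sC_Ir O A) (Tseq (Tpar (Tid A) (eff B)) s).

(* refinement D < C : some test {D_j}_{j in Y} and Y0 (given by a mask m)
   with C = sum_{j in Y0} D_j and D among the D_j, j in Y0 *)
Definition selected {A B : Sys O} (l : list (Tr A B)) (m : list bool) : list (Tr A B) :=
  map fst (filter snd (combine l m)).

Definition refines {A B : Sys O} (D C : Tr A B) : Prop :=
  exists (l : list (Tr A B)) (m : list bool),
    is_test l /\ length m = length l /\
    C = Tsum (selected l m) /\ In D (selected l m).

Definition atomic {A B : Sys O} (C : Tr A B) : Prop :=
  isT C /\
  forall D, refines D C -> exists lam, 0 <= lam <= 1 /\ D = Tscal lam C.

Definition pure {A : Sys O} (rho : Tr sI A) : Prop := atomic rho.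

End Defs.

Arguments castT {O A A' B B'}.
Arguments Tsum {O A B}.
Arguments lincomb {O A B}.
Arguments prb {O A}.
Arguments normalized {O A}.
Arguments normstate {O A}.
Arguments channel {O A B}.
Arguments reversible {O A B}.
Arguments marginal {O A B}.
Arguments selected {O A B}.
Arguments refines {O A B}.
Arguments atomic {O A B}.
Arguments pure {O A}.

Section Fw.
Variable O : OPT.
Implicit Types A B C D S : Sys O.

Record Framework : Prop := {
  add_assoc : forall A B (x y z : Tr A B), Tadd x (Tadd y z) = Tadd (Tadd x y) z;
  add_comm : forall A B (x y : Tr A B), Tadd x y = Tadd y x;
  add_0 : forall A B (x : Tr A B), Tadd Tzero x = x;
  add_opp : forall A B (x : Tr A B), Tadd x (Tscal (-1) x) = Tzero;
  scal_1 : forall A B (x : Tr A B), Tscal 1 x = x;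
  scal_scal : forall A B a b (x : Tr A B), Tscal a (Tscal b x) = Tscal (a * b) x;
  scal_addl : forall A B a b (x : Tr A B), Tscal (a + b) x = Tadd (Tscal a x) (Tscal b x);
  scal_addr : forall A B a (x y : Tr A B), Tscal a (Tadd x y) = Tadd (Tscal a x) (Tscal a y);
  span_T : forall A B (x : Tr A B), exists (l : list (Tr A B)) cs,
      Forall isT l /\ length cs = length l /\ x = lincomb cs l;
  findim : forall A, exists l : list (Tr (o:=O) sI A), forall rho,
      exists cs, length cs = length l /\ rho = lincomb cs l;
  seq_addl : forall A B C (g g' : Tr B C) (f : Tr A B),
      Tseq (Tadd g g') f = Tadd (Tseq g f) (Tseq g' f);
  seq_addr : forall A B C (g : Tr B C) (f f' : Tr A B),
      Tseq g (Tadd f f') = Tadd (Tseq g f) (Tseq g f');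
  seq_scall : forall A B C a (g : Tr B C) (f : Tr A B), Tseq (Tscal a g) f = Tscal a (Tseq g f);
  seq_scalr : forall A B C a (g : Tr B C) (f : Tr A B), Tseq g (Tscal a f) = Tscal a (Tseq g f);
  par_addl : forall A B C D (f f' : Tr A B) (g : Tr C D),
      Tpar (Tadd f f') g = Tadd (Tpar f g) (Tpar f' g);
  par_addr : forall A B C D (f : Tr A B) (g g' : Tr C D),
      Tpar f (Tadd g g') = Tadd (Tpar f g) (Tpar f g');
  par_scall : forall A B C D a (f : Tr A B) (g : Tr C D), Tpar (Tscal a f) g = Tscal a (Tpar f g);
  par_scalr : forall A B C D a (f : Tr A B) (g : Tr C D), Tpar f (Tscal a g) = Tscal a (Tpar f g);
  seq_assoc : forall A B C D (h : Tr C D) (g : Tr B C) (f : Tr A B),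
      Tseq h (Tseq g f) = Tseq (Tseq h g) f;
  seq_idl : forall A B (f : Tr A B), Tseq (Tid B) f = f;
  seq_idr : forall A B (f : Tr A B), Tseq f (Tid A) = f;
  par_seq : forall A B C A' B' C' (g : Tr B C) (f : Tr A B) (g' : Tr B' C') (f' : Tr A' B'),
      Tpar (Tseq g f) (Tseq g' f') = Tseq (Tpar g g') (Tpar f f');
  par_id : forall A B, Tpar (Tid A) (Tid B) = Tid (sC A B);
  par_Il : forall A B (f : Tr A B),
      Tpar (Tid sI) f = castT (eq_sym (sC_Il O A)) (eq_sym (sC_Il O B)) f;
  par_Ir : forall A B (f : Tr A B),
      Tpar f (Tid sI) = castT (eq_sym (sC_Ir O A)) (eq_sym (sC_Ir O B)) f;
  ident_T : forall A B (f g : Tr A B),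
      (forall S (rho : Tr sI (sC A S)), isT rho ->
         Tseq (Tpar f (Tid S)) rho = Tseq (Tpar g (Tid S)) rho) -> f = g;
  ident_states : forall A (rho sigma : Tr sI A),
      (forall a : Tr A sI, isT a -> prb a rho = prb a sigma) -> rho = sigma;
  ident_effects : forall A (a b : Tr A sI),
      (forall rho : Tr sI A, isT rho -> prb a rho = prb b rho) -> a = b;
  test_T : forall A B (l : list (Tr A B)), is_test l -> Forall isT l;
  T_test : forall A B (C : Tr A B), isT C -> exists l, is_test l /\ In C l;
  test_id : forall A, is_test [Tid A];
  test_perm : forall A B (l l' : list (Tr A B)), Permutation l l' ->
      is_test l -> is_test l';
  test_seq : forall A B C (l1 : list (Tr A B)) (l2 : list (Tr B C)),
      is_test l1 -> is_test l2 ->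
      is_test (flat_map (fun f => map (fun g => Tseq g f) l2) l1);
  test_par : forall A B C D (l1 : list (Tr A B)) (l2 : list (Tr C D)),
      is_test l1 -> is_test l2 ->
      is_test (flat_map (fun f => map (fun g => Tpar f g) l2) l1);
  (* coarse-graining (merging two outcomes; with test_perm this gives
     coarse-graining over any partition) *)
  test_coarse : forall A B (x y : Tr A B) l,
      is_test (x :: y :: l) -> is_test (Tadd x y :: l);
  (* conditioning: after outcome i, perform test g i *)
  test_cond : forall A B C (l : list (Tr A B)) (g : nat -> list (Tr B C)),
      is_test l -> (forall i, (i < length l)%nat -> is_test (g i)) ->
      is_test (flat_map (fun p => map (fun d => Tseq d (snd p)) (g (fst p)))
                        (combine (seq 0 (length l)) l));
  prob_inj : forall p q : Tr (o:=O) sI sI, prob p = prob q -> p = q;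
  prob_surj : forall r, exists p : Tr (o:=O) sI sI, prob p = r;
  prob_add : forall p q : Tr (o:=O) sI sI, prob (Tadd p q) = prob p + prob q;
  prob_scal : forall a (p : Tr (o:=O) sI sI), prob (Tscal a p) = a * prob p;
  prob_seq : forall p q : Tr (o:=O) sI sI, prob (Tseq p q) = prob p * prob q;
  prob_id : prob (Tid (o:=O) sI) = 1;
  prob_T : forall p : Tr (o:=O) sI sI, isT p <-> 0 <= prob p <= 1;
  prob_test : forall l : list (Tr (o:=O) sI sI), is_test l ->
      fold_right Rplus 0 (map prob l) = 1;
  eff_test : forall A, is_test [eff A];
  eff_unique : forall A (e : Tr A sI), is_test [e] -> e = eff A;
  eff_par : forall A B,
      eff (sC A B) = castT eq_refl (sC_Ir O sI) (Tpar (eff A) (eff B));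
  local_discr : forall A B (rho sigma : Tr sI (sC A B)), isT rho -> isT sigma ->
      rho <> sigma -> exists (a : Tr A sI) (b : Tr B sI), isT a /\ isT b /\
      Tseq (Tpar a b) rho <> Tseq (Tpar a b) sigma;
  nondet : exists p : Tr (o:=O) sI sI, isT p /\ 0 < prob p < 1;
  convex : forall A B (f g : Tr A B) p, isT f -> isT g -> 0 <= p <= 1 ->
      isT (Tadd (Tscal p f) (Tscal (1 - p) g));
  perf_dist : exists A (rho0 rho1 : Tr sI A) (a0 a1 : Tr A sI),
      normstate rho0 /\ normstate rho1 /\ is_test [a0; a1] /\
      prb a0 rho0 = 1 /\ prb a0 rho1 = 0 /\ prb a1 rho0 = 0 /\ prb a1 rho1 = 1;
  swap : exists sw : (forall A B : Sys O, Tr (sC A B) (sC B A)),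
      (forall A B, reversible (sw A B)) /\
      forall A A' B B' (f : Tr A A') (g : Tr B B'),
        Tseq (sw A' B') (Tpar f g) = Tseq (Tpar g f) (sw A B)
}.

End Fw.

Definition Purification (O : OPT) : Prop :=
  (forall (A : Sys O) (rho : Tr sI A), normstate rho ->
     exists (B : Sys O) (Psi : Tr sI (sC A B)),
       normstate Psi /\ pure Psi /\ marginal Psi = rho) /\
  (forall (A B : Sys O) (Psi Psi' : Tr sI (sC A B)),
     normstate Psi -> pure Psi -> normstate Psi' -> pure Psi' ->
     marginal Psi = marginal Psi' ->
     exists U : Tr B B, reversible U /\ Psi' = Tseq (Tpar (Tid A) U) Psi).

From Stdlib Require Import Reals List.

(* Idea: a state psi of A is, up to the identification A = IA, a state of
   the composite IA whose marginal on the trivial system I is the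
   probability (e_A|psi).  If psi is normalized this marginal is the
   deterministic probability 1, so any two normalized pure states psi and
   psi' of A become two pure purifications, with purifying system A, of the
   same state of I.  The uniqueness clause of the Purification Postulate
   then yields a reversible U on A with psi' = (I_I (x) U) psi, which under
   A = IA is just psi' = U psi. *)

Section TrivialExtension.
Variable O : OPT.
Hypothesis HF : Framework O.

Definition extend {A : Sys O} (rho : Tr sI A) : Tr sI (sC sI A) :=
  castT eq_refl (eq_sym (sC_Il O A)) rho.

Lemma cast_state_prop (P : forall X : Sys O, Tr sI X -> Prop)
  {X Y : Sys O} (e : X = Y) (rho : Tr sI X) : P X rho -> P Y (castT eq_refl e rho).
Proof. destruct e. exact (fun h => h). Qed.

Lemma cast_state_inj {X Y : Sys O} (e : X = Y) (rho sigma : Tr sI X) :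
  castT eq_refl e rho = castT eq_refl e sigma -> rho = sigma.
Proof. destruct e. exact (fun h => h). Qed.

Lemma cast_seq {X Y Z W : Sys O} (e1 : X = Y) (e2 : Z = W)
  (f : Tr X Z) (rho : Tr sI X) :
  Tseq (castT e1 e2 f) (castT eq_refl e1 rho) = castT eq_refl e2 (Tseq f rho).
Proof. destruct e1, e2. reflexivity. Qed.

Lemma cast_prb {X Y : Sys O} (e : X = Y) (a : Tr X sI) (rho : Tr sI X) :
  prb (castT e eq_refl a) (castT eq_refl e rho) = prb a rho.
Proof. destruct e. reflexivity. Qed.

Lemma eff_cast {X Y : Sys O} (e : X = Y) : eff Y = castT e eq_refl (eff X).
Proof. destruct e. reflexivity. Qed.

Lemma extend_normstate (A : Sys O) (rho : Tr sI A) :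
  normstate rho -> normstate (extend rho).
Proof.
  intros [Trho Nrho]. split.
  - exact (cast_state_prop (fun X s => isT s) _ rho Trho).
  - unfold normalized, extend. rewrite (eff_cast (eq_sym (sC_Il O A))).
    rewrite cast_prb. exact Nrho.
Qed.

Lemma extend_pure (A : Sys O) (rho : Tr sI A) : pure rho -> pure (extend rho).
Proof. exact (cast_state_prop (fun X s => pure s) _ rho). Qed.

Lemma extend_local (A : Sys O) (U : Tr A A) (rho : Tr sI A) :
  Tseq (Tpar (Tid sI) U) (extend rho) = extend (Tseq U rho).
Proof. unfold extend. rewrite (par_Il HF). apply cast_seq. Qed.

Lemma marginal_extend (A B : Sys O) (rho : Tr sI A) (sigma : Tr sI B) :
  Tseq (eff A) rho = Tseq (eff B) sigma ->
  marginal (extend rho) = marginal (extend sigma).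
Proof.
  intros Heff. unfold marginal, extend. f_equal.
  rewrite !(par_Il HF), !cast_seq, Heff. reflexivity.
Qed.

Lemma normalized_eff (A B : Sys O) (rho : Tr sI A) (sigma : Tr sI B) :
  normalized rho -> normalized sigma -> Tseq (eff A) rho = Tseq (eff B) sigma.
Proof.
  unfold normalized, prb. intros Nrho Nsigma.
  apply (prob_inj HF). rewrite Nrho, Nsigma. reflexivity.
Qed.

End TrivialExtension.

Arguments extend {O A} rho.
Arguments extend_normstate {O A rho} _.
Arguments extend_pure {O A rho} _.
Arguments extend_local {O} HF {A} U rho.
Arguments marginal_extend {O} HF {A B rho sigma} _.
Arguments normalized_eff {O} HF {A B rho sigma} _ _.
Arguments cast_state_inj {O X Y} e {rho sigma} _.

Theorem mainTheorem1 (O : OPT) (HF : Framework O) (HP : Purification O)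
  (A : Sys O) (psi psi' : Tr sI A) :
  normstate psi -> pure psi -> normstate psi' -> pure psi' ->
  exists U : Tr A A, reversible U /\ psi' = Tseq U psi.
Proof.
  intros Npsi Ppsi Npsi' Ppsi'.
  destruct HP as [_ purification_unique].
  assert (Hmarg : marginal (extend psi) = marginal (extend psi')).
  { apply (marginal_extend HF).
    apply (normalized_eff HF); [apply Npsi | apply Npsi']. }
  destruct (purification_unique sI A (extend psi) (extend psi')
              (extend_normstate Npsi) (extend_pure Ppsi)
              (extend_normstate Npsi') (extend_pure Ppsi') Hmarg)
    as [U [HU Hpsi']].
  exists U. split; [exact HU |].
  rewrite (extend_local HF) in Hpsi'.
  exact (cast_state_inj _ Hpsi').
Qed.
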